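(* Let $h$ be the Hahn sequence space and let $\Delta:h\to h$ be the forward difference operator $(\Delta x)_k=x_k-x_{k+1}$. Then the spectrum of $\Delta$ on $h$ is $$\sigma(\Delta,h)=\{\alpha\in\mathbb{C}:|1-\alpha|\le 1\}.$$
   Context: Sequences are indexed by $\mathbb{N}=\{0,1,2,\dots\}$. The Hahn sequence space is $h=\{x=(x_k)\in\mathbb{C}^{\mathbb{N}}:\sum_{k=1}^\infty k|x_k-x_{k+1}|<\infty \text{ and } \lim_{k\to\infty}x_k=0\}$, a Banach space with the norm $\|x\|_h=\sum_k k|x_k-x_{k+1}|+\sup_k|x_k|$. The forward difference operator $\Delta$ is given by the infinite matrix with $1$ on the main diagonal, $-1$ on the first superdiagonal and $0$ elsewhere, i.e. $(\Delta x)_k=x_k-x_{k+1}$. For a bounded linear operator $T$ on a Banach space $X$, the spectrum $\sigma(T,X)$ is the set of $\alpha\in\mathbb{C}$ for which $\alpha I-T$ does not have a bounded inverse defined on all of $X$. *)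

From Stdlib Require Import Reals.
From Coquelicot Require Import Coquelicot.

Definition seqC := nat -> C.

(* Membership in the Hahn sequence space h:
   sum_k k |x_k - x_{k+1}| < oo  (the k = 0 term vanishes)  and  x_k -> 0. *)
Definition in_hahn (x : seqC) : Prop :=
  ex_series (fun k => INR k * Cmod (Cminus (x k) (x (S k))))
  /\ filterlim x eventually (locally (RtoC 0)).

Definition hahn_norm (x : seqC) : R :=
  Series (fun k => INR k * Cmod (Cminus (x k) (x (S k))))
  + real (Sup_seq (fun k => Cmod (x k))).

Definition Delta (x : seqC) : seqC := fun k => Cminus (x k) (x (S k)).

Definition shifted_Delta (alpha : C) (x : seqC) : seqC :=
  fun k => Cminus (Cmult alpha (x k)) (Delta x k).

Definition hahn_resolvent (alpha : C) : Prop :=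
  exists S : seqC -> seqC,
    (forall y, in_hahn y -> in_hahn (S y))
    /\ (forall y z (a b : C), in_hahn y -> in_hahn z ->
          S (fun k => Cplus (Cmult a (y k)) (Cmult b (z k)))
          = (fun k => Cplus (Cmult a (S y k)) (Cmult b (S z k))))
    /\ (exists M : R, forall y, in_hahn y -> hahn_norm (S y) <= M * hahn_norm y)
    /\ (forall y, in_hahn y -> shifted_Delta alpha (S y) = y)
    /\ (forall x, in_hahn x -> S (shifted_Delta alpha x) = x).

Definition hahn_spectrum_Delta (alpha : C) : Prop := ~ hahn_resolvent alpha.

From Pilot Require Import Defs.
From Stdlib Require Import Reals.
From Coquelicot Require Import Coquelicot.
From Stdlib Require Import Lra Lia FunctionalExtensionality.

(* Write beta = alpha - 1, so that (alpha I - Delta x)_k = beta x_k + x_(k+1).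
   If |beta| > 1, the recurrence beta x_k + x_(k+1) = y_k has the solution
   x_k = sum_n beta^-1 (-beta^-1)^n y_(k+n).  This operator commutes with Delta and,
   since k <= k + n, the weighted variation sum_k k |x_k - x_(k+1)| is bounded by
   2/(|beta| - 1) times that of y; the same holds for the sup norm, so the inverse is
   bounded on h.
   If |beta| <= 1, the geometric sequences x_k = g^k with g = -(1 - s) beta lie in h,
   have norm at least 1, and satisfy alpha x - Delta x = s beta x; letting s -> 0
   contradicts the boundedness of any inverse. *)

Lemma sum_n_nonneg (a : nat -> R) N : (forall n, 0 <= a n) -> 0 <= sum_n a N.
Proof.
  intros Ha; induction N as [|N IH].
  - rewrite sum_O; apply Ha.
  - rewrite sum_Sn; unfold plus; simpl; specialize (Ha (S N)); lra.
Qed.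

Lemma term_le_sum_n (a : nat -> R) N k :
  (forall n, 0 <= a n) -> (k <= N)%nat -> a k <= sum_n a N.
Proof.
  intros Ha Hk; induction N as [|N IH].
  - replace k with 0%nat by lia; rewrite sum_O; lra.
  - rewrite sum_Sn; unfold plus; simpl.
    destruct (Nat.eq_dec k (S N)) as [->|Hne].
    + pose proof (sum_n_nonneg a N Ha); lra.
    + specialize (IH ltac:(lia)); specialize (Ha (S N)); lra.
Qed.

Lemma sum_n_shift_le (b : nat -> R) n K :
  (forall j, 0 <= b j) -> sum_n (fun k => b (k + n)%nat) K <= sum_n b (K + n).
Proof.
  intros Hb; induction K as [|K IH].
  - rewrite sum_O; apply term_le_sum_n; auto.
  - replace (S K + n)%nat with (S (K + n)) by lia.
    rewrite !sum_Sn; unfold plus; simpl; lra.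
Qed.

Lemma ex_series_bounded_nonneg (a : nat -> R) M :
  (forall n, 0 <= a n) -> (forall N, sum_n a N <= M) ->
  ex_series a /\ Series a <= M.
Proof.
  intros Ha HM.
  destruct (ex_finite_lim_seq_incr (sum_n a) M) as [l Hl]; auto.
  { intros n; rewrite sum_Sn; unfold plus; simpl; specialize (Ha (S n)); lra. }
  split; [now exists l|].
  rewrite (is_series_unique a l Hl).
  apply (is_lim_seq_le (sum_n a) (fun _ => M) l M); auto using is_lim_seq_const.
Qed.

Lemma sum_n_le_Series (a : nat -> R) N :
  (forall n, 0 <= a n) -> ex_series a -> sum_n a N <= Series a.
Proof.
  intros Ha [l Hl]; rewrite (is_series_unique a l Hl).
  apply (is_lim_seq_incr_compare (sum_n a) l Hl).
  intros n; rewrite sum_Sn; unfold plus; simpl; specialize (Ha (S n)); lra.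
Qed.

Lemma term_le_Series (a : nat -> R) n :
  (forall n, 0 <= a n) -> ex_series a -> a n <= Series a.
Proof.
  intros Ha He; eapply Rle_trans; [apply (term_le_sum_n a n n)|apply sum_n_le_Series]; auto.
Qed.

Lemma Series_nonneg (a : nat -> R) :
  (forall n, 0 <= a n) -> ex_series a -> 0 <= Series a.
Proof. intros Ha He; eapply Rle_trans; [apply (Ha 0%nat)|apply term_le_Series; auto]. Qed.

Lemma ex_series_mult_l (c : R) (a : nat -> R) : ex_series a -> ex_series (fun n => c * a n).
Proof. exact (ex_series_scal_l c a). Qed.

Lemma ex_series_Series_le (a b : nat -> R) :
  (forall n, 0 <= a n <= b n) -> ex_series b -> ex_series a /\ Series a <= Series b.
Proof.
  intros Hab Hb; split; [|now apply Series_le].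
  apply (ex_series_le a b); auto.
  intros n; unfold norm; simpl; unfold abs; simpl; rewrite Rabs_pos_eq; apply Hab.
Qed.

Lemma Series_sum_n (f : nat -> nat -> R) K :
  (forall k, ex_series (f k)) ->
  ex_series (fun n => sum_n (fun k => f k n) K) /\
  Series (fun n => sum_n (fun k => f k n) K) = sum_n (fun k => Series (f k)) K.
Proof.
  intros Hf; induction K as [|K [He Hs]].
  - rewrite sum_O; split.
    + eapply ex_series_ext; [|apply (Hf 0%nat)]; intros; now rewrite sum_O.
    + apply Series_ext; intros; now rewrite sum_O.
  - rewrite sum_Sn, <- Hs; unfold plus; simpl; split.
    + eapply ex_series_ext; [|apply (ex_series_plus _ _ He (Hf (S K)))].
      intros n; now rewrite sum_Sn.
    + rewrite <- Series_plus; auto; apply Series_ext; intros n; now rewrite sum_Sn.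
Qed.

Lemma Series_tail_weighted_le (c b : nat -> R) :
  (forall n, 0 <= c n) -> (forall n, 0 <= b n) -> ex_series c -> ex_series b ->
  (forall k, ex_series (fun n => c n * b (k + n)%nat)) /\
  ex_series (fun k => Series (fun n => c n * b (k + n)%nat)) /\
  Series (fun k => Series (fun n => c n * b (k + n)%nat)) <= Series c * Series b.
Proof.
  intros Hc Hb Hce Hbe.
  assert (Hinner : forall k, ex_series (fun n => c n * b (k + n)%nat)).
  { intros k; apply (ex_series_Series_le _ (fun n => c n * Series b)).
    - intros n; split; [apply Rmult_le_pos; auto|].
      apply Rmult_le_compat_l; auto; apply term_le_Series; auto.
    - now apply ex_series_scal_r. }
  split; [exact Hinner|].
  apply ex_series_bounded_nonneg.
  - intros k; apply Series_nonneg; auto; intros n; apply Rmult_le_pos; auto.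
  - intros K; destruct (Series_sum_n (fun k n => c n * b (k + n)%nat) K Hinner) as [_ <-].
    rewrite <- Series_scal_r; apply Series_le; [|now apply ex_series_scal_r].
    intros n; split; [apply sum_n_nonneg; intros; apply Rmult_le_pos; auto|].
    rewrite (sum_n_mult_l (K := R_Ring) (c n) (fun k => b (k + n)%nat)); unfold mult; simpl.
    apply Rmult_le_compat_l; auto.
    rewrite (sum_n_ext _ (fun k => b (k + n)%nat)) by (intros; f_equal; lia).
    eapply Rle_trans; [apply sum_n_shift_le|apply sum_n_le_Series]; auto.
Qed.

Lemma Sup_seq_le_const (u : nat -> R) B :
  (forall k, u k <= B) -> Rbar_le (Sup_seq u) B.
Proof.
  intros HB; apply (is_sup_seq_le u (fun _ => Finite B)); auto using Sup_seq_correct.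
  intros eps; split; [intros; simpl; destruct eps; simpl; lra|].
  exists 0%nat; simpl; destruct eps; simpl; lra.
Qed.

Lemma real_Sup_seq_spec (u : nat -> R) B :
  (forall k, 0 <= u k <= B) ->
  (forall k, u k <= real (Sup_seq u)) /\
  (forall B', (forall k, u k <= B') -> real (Sup_seq u) <= B').
Proof.
  intros HB.
  assert (Hup : Rbar_le (Sup_seq u) B) by (apply Sup_seq_le_const; apply HB).
  assert (Hlo : forall k, Rbar_le (u k) (Sup_seq u))
    by (intros k; apply (Sup_seq_minor_le _ (u k) k); simpl; lra).
  destruct (Sup_seq u) as [s| |] eqn:Es; simpl in *; try contradiction.
  - split; [exact Hlo|]; intros B' HB'.
    pose proof (Sup_seq_le_const u B' HB') as H; now rewrite Es in H.
  - destruct (Hlo 0%nat).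
Qed.

Lemma filterlim_0_iff (x : seqC) :
  filterlim x eventually (locally (RtoC 0)) <->
  forall eps, 0 < eps -> exists N, forall k, (N <= k)%nat -> Cmod (x k) < eps.
Proof.
  rewrite filterlim_locally_ball_norm; unfold ball_norm.
  assert (Hx : forall k, norm (minus (x k) (RtoC 0)) = Cmod (x k))
    by (intros k; unfold norm, minus, plus, opp; simpl; f_equal; ring).
  split.
  - intros H eps Heps; destruct (H (mkposreal eps Heps)) as [N HN].
    exists N; intros k Hk; rewrite <- Hx; now apply HN.
  - intros H eps; destruct (H eps (cond_pos eps)) as [N HN].
    exists N; intros k Hk; rewrite Hx; now apply HN.
Qed.

Lemma filterlim_0_bounded (x : seqC) :
  filterlim x eventually (locally (RtoC 0)) -> exists B, forall k, Cmod (x k) <= B.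
Proof.
  intros Hx; destruct (proj1 (filterlim_0_iff x) Hx 1 ltac:(lra)) as [N HN].
  exists (1 + sum_n (fun j => Cmod (x j)) N); intros k.
  pose proof (sum_n_nonneg (fun j => Cmod (x j)) N (fun j => Cmod_ge_0 _)).
  destruct (Compare_dec.le_lt_dec N k) as [Hk|Hk]; [specialize (HN k Hk); lra|].
  pose proof (term_le_sum_n (fun j => Cmod (x j)) N k (fun j => Cmod_ge_0 _) ltac:(lia)).
  simpl in *; lra.
Qed.

Lemma Rabs_fst_le_Cmod (z : C) : Rabs (fst z) <= Cmod z.
Proof. pose proof (Rmax_Cmod z); pose proof (Rmax_l (Rabs (fst z)) (Rabs (snd z))); lra. Qed.

Lemma Rabs_snd_le_Cmod (z : C) : Rabs (snd z) <= Cmod z.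
Proof. pose proof (Rmax_Cmod z); pose proof (Rmax_r (Rabs (fst z)) (Rabs (snd z))); lra. Qed.

Lemma Cmod_le_Rabs_fst_snd (z : C) : Cmod z <= Rabs (fst z) + Rabs (snd z).
Proof.
  destruct z as [a b]; unfold Cmod; simpl.
  pose proof (Rabs_pos a); pose proof (Rabs_pos b).
  rewrite <- (sqrt_square (Rabs a + Rabs b)) by lra; apply sqrt_le_1_alt.
  pose proof (Rsqr_abs a); pose proof (Rsqr_abs b); unfold Rsqr in *; nra.
Qed.

Definition abs_summable (a : nat -> C) : Prop := ex_series (fun n => Cmod (a n)).

(* Summed componentwise; the value is meaningful only for [abs_summable a]. *)
Definition CSeries (a : nat -> C) : C :=
  (Series (fun n => fst (a n)), Series (fun n => snd (a n))).

Lemma abs_summable_le (a : nat -> C) (b : nat -> R) :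
  (forall n, Cmod (a n) <= b n) -> ex_series b -> abs_summable a.
Proof.
  intros Hab Hb; apply (ex_series_Series_le _ b); auto.
  intros n; split; [apply Cmod_ge_0|apply Hab].
Qed.

Lemma abs_summable_scal (c : C) (a : nat -> C) :
  abs_summable a -> abs_summable (fun n => c * a n)%C.
Proof.
  intros Ha; apply (abs_summable_le _ (fun n => Cmod (a n) * Cmod c)).
  - intros n; rewrite Cmod_mult; lra.
  - now apply ex_series_scal_r.
Qed.

Lemma abs_summable_components (a : nat -> C) : abs_summable a ->
  ex_series (fun n => Rabs (fst (a n))) /\ ex_series (fun n => Rabs (snd (a n))).
Proof.
  intros Ha; split.
  - apply (ex_series_Series_le _ _ (fun n => conj (Rabs_pos _) (Rabs_fst_le_Cmod (a n))) Ha).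
  - apply (ex_series_Series_le _ _ (fun n => conj (Rabs_pos _) (Rabs_snd_le_Cmod (a n))) Ha).
Qed.

Lemma CSeries_ext (a b : nat -> C) : (forall n, a n = b n) -> CSeries a = CSeries b.
Proof. intros Hab; f_equal; now apply functional_extensionality. Qed.

Lemma CSeries_plus (a b : nat -> C) : abs_summable a -> abs_summable b ->
  CSeries (fun n => a n + b n)%C = (CSeries a + CSeries b)%C.
Proof.
  intros Ha Hb.
  destruct (abs_summable_components a Ha) as [Ha1 Ha2].
  destruct (abs_summable_components b Hb) as [Hb1 Hb2].
  unfold CSeries, Cplus; simpl; f_equal; rewrite <- Series_plus; auto using ex_series_Rabs.
Qed.

Lemma CSeries_minus (a b : nat -> C) : abs_summable a -> abs_summable b ->
  CSeries (fun n => a n - b n)%C = (CSeries a - CSeries b)%C.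
Proof.
  intros Ha Hb.
  destruct (abs_summable_components a Ha) as [Ha1 Ha2].
  destruct (abs_summable_components b Hb) as [Hb1 Hb2].
  unfold CSeries, Cminus, Cplus, Copp; simpl; f_equal;
    rewrite <- Series_opp, <- Series_plus; auto using ex_series_Rabs, ex_series_opp.
Qed.

Lemma CSeries_scal (c : C) (a : nat -> C) : abs_summable a ->
  CSeries (fun n => c * a n)%C = (c * CSeries a)%C.
Proof.
  intros Ha; destruct (abs_summable_components a Ha) as [Ha1 Ha2].
  apply ex_series_Rabs in Ha1, Ha2.
  unfold CSeries, Cmult; simpl; f_equal; rewrite <- !Series_scal_l.
  - rewrite <- Series_minus; auto using ex_series_mult_l.
  - rewrite <- Series_plus; auto using ex_series_mult_l.
Qed.

Lemma CSeries_incr_1 (a : nat -> C) : abs_summable a ->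
  CSeries a = (a 0%nat + CSeries (fun n => a (S n)))%C.
Proof.
  intros Ha; destruct (abs_summable_components a Ha) as [Ha1 Ha2].
  unfold CSeries, Cplus; simpl; f_equal; apply Series_incr_1; auto using ex_series_Rabs.
Qed.

Lemma Cmod_CSeries_le (a : nat -> C) : abs_summable a ->
  Cmod (CSeries a) <= 2 * Series (fun n => Cmod (a n)).
Proof.
  intros Ha; destruct (abs_summable_components a Ha) as [Ha1 Ha2].
  eapply Rle_trans; [apply Cmod_le_Rabs_fst_snd|]; simpl.
  pose proof (Series_Rabs _ Ha1); pose proof (Series_Rabs _ Ha2).
  assert (Series (fun n => Rabs (fst (a n))) <= Series (fun n => Cmod (a n)))
    by (apply Series_le; auto; intros n; split; [apply Rabs_pos|apply Rabs_fst_le_Cmod]).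
  assert (Series (fun n => Rabs (snd (a n))) <= Series (fun n => Cmod (a n)))
    by (apply Series_le; auto; intros n; split; [apply Rabs_pos|apply Rabs_snd_le_Cmod]).
  lra.
Qed.

Definition hahn_term (x : seqC) (k : nat) : R := INR k * Cmod (Defs.Delta x k).

Lemma hahn_term_nonneg (x : seqC) k : 0 <= hahn_term x k.
Proof. apply Rmult_le_pos; [apply pos_INR|apply Cmod_ge_0]. Qed.

Lemma Cmod_Delta_le (x : seqC) B k : (forall j, Cmod (x j) <= B) -> Cmod (Defs.Delta x k) <= 2 * B.
Proof.
  intros HB; unfold Defs.Delta, Cminus; eapply Rle_trans; [apply Cmod_triangle|].
  rewrite Cmod_opp; pose proof (HB k); pose proof (HB (S k)); lra.
Qed.

Section Resolvent.

Variable beta : C.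
Hypothesis Hbeta : 1 < Cmod beta.

Definition coef (n : nat) : C := (/ beta * Cpow (- / beta) n)%C.

Definition resolvent (y : seqC) : seqC :=
  fun k => CSeries (fun n => coef n * y (k + n)%nat)%C.

Lemma beta_neq_0 : beta <> RtoC 0.
Proof. intros E; rewrite E, Cmod_0 in Hbeta; lra. Qed.

Lemma coef_0 : (beta * coef 0)%C = RtoC 1.
Proof. pose proof beta_neq_0; unfold coef; simpl; now field. Qed.

Lemma coef_S n : (beta * coef (S n))%C = (- coef n)%C.
Proof. pose proof beta_neq_0; unfold coef; simpl; now field. Qed.

Lemma Cmod_coef n : Cmod (coef n) = / Cmod beta * (/ Cmod beta) ^ n.
Proof.
  pose proof beta_neq_0; unfold coef.
  now rewrite Cmod_mult, Cmod_pow, Cmod_opp, Cmod_inv.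
Qed.

Lemma is_series_Cmod_coef : is_series (fun n => Cmod (coef n)) (/ (Cmod beta - 1)).
Proof.
  assert (Hq : 0 < / Cmod beta < 1).
  { split; [apply Rinv_0_lt_compat; lra|].
    rewrite <- Rinv_1; apply Rinv_lt_contravar; lra. }
  eapply is_series_ext; [intros n; symmetry; apply Cmod_coef|].
  replace (/ (Cmod beta - 1)) with (/ Cmod beta * / (1 - / Cmod beta)) by (field; lra).
  apply (is_series_scal_l (V := R_NormedModule)), is_series_geom.
  rewrite Rabs_pos_eq; lra.
Qed.

Lemma Series_coef_weighted_le (u : nat -> R) B :
  (forall n, 0 <= u n <= B) ->
  ex_series (fun n => Cmod (coef n) * u n) /\
  Series (fun n => Cmod (coef n) * u n) <= B / (Cmod beta - 1).
Proof.
  intros Hu.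
  assert (Hc : ex_series (fun n => Cmod (coef n) * B))
    by (apply ex_series_scal_r; eexists; apply is_series_Cmod_coef).
  replace (B / (Cmod beta - 1)) with (Series (fun n => Cmod (coef n) * B)).
  - apply ex_series_Series_le; auto.
    intros n; pose proof (Cmod_ge_0 (coef n)); specialize (Hu n); split; nra.
  - rewrite Series_scal_r, (is_series_unique _ _ is_series_Cmod_coef); unfold Rdiv; ring.
Qed.

Lemma abs_summable_coef_shift (u : seqC) B k :
  (forall j, Cmod (u j) <= B) -> abs_summable (fun n => coef n * u (k + n)%nat)%C.
Proof.
  intros HB; assert (HB0 : 0 <= B) by (eapply Rle_trans; [apply Cmod_ge_0|apply (HB 0%nat)]).
  apply (abs_summable_le _ (fun n => Cmod (coef n) * Cmod (u (k + n)%nat))).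
  - intros n; rewrite Cmod_mult; lra.
  - apply (Series_coef_weighted_le _ B); intros n; split; auto using Cmod_ge_0.
Qed.

Lemma Cmod_resolvent_le (y : seqC) B k :
  (forall j, Cmod (y j) <= B) ->
  Cmod (resolvent y k) <= 2 * Series (fun n => Cmod (coef n) * Cmod (y (k + n)%nat)).
Proof.
  intros HB; eapply Rle_trans; [apply Cmod_CSeries_le; eapply abs_summable_coef_shift; eauto|].
  apply Rmult_le_compat_l; [lra|]; apply Req_le, Series_ext; intros n; apply Cmod_mult.
Qed.

Lemma resolvent_recurrence (y : seqC) B k :
  (forall j, Cmod (y j) <= B) -> (beta * resolvent y k + resolvent y (S k))%C = y k.
Proof.
  intros HB; unfold resolvent.
  rewrite <- CSeries_scal by (eapply abs_summable_coef_shift; eauto).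
  rewrite CSeries_incr_1 by (apply abs_summable_scal; eapply abs_summable_coef_shift; eauto).
  rewrite (CSeries_ext _ (fun n => - 1 * (coef n * y (S k + n)%nat))%C).
  - rewrite CSeries_scal by (eapply abs_summable_coef_shift; eauto).
    rewrite Nat.add_0_r, Cmult_assoc, coef_0; ring.
  - intros n; rewrite Cmult_assoc, coef_S.
    replace (k + S n)%nat with (S k + n)%nat by lia; ring.
Qed.

Lemma resolvent_linear (y z : seqC) (a b : C) By Bz :
  (forall j, Cmod (y j) <= By) -> (forall j, Cmod (z j) <= Bz) ->
  resolvent (fun k => a * y k + b * z k)%C = (fun k => a * resolvent y k + b * resolvent z k)%C.
Proof.
  intros Hy Hz; apply functional_extensionality; intros k; unfold resolvent.
  pose proof (abs_summable_coef_shift y By k Hy).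
  pose proof (abs_summable_coef_shift z Bz k Hz).
  rewrite (CSeries_ext _ (fun n => a * (coef n * y (k + n)%nat) + b * (coef n * z (k + n)%nat))%C)
    by (intros n; ring).
  rewrite CSeries_plus, !CSeries_scal; auto using abs_summable_scal.
Qed.

Lemma resolvent_Delta (y : seqC) B k :
  (forall j, Cmod (y j) <= B) -> Defs.Delta (resolvent y) k = resolvent (Defs.Delta y) k.
Proof.
  intros HB; unfold Defs.Delta, resolvent.
  rewrite <- CSeries_minus by (eapply abs_summable_coef_shift; eauto).
  apply CSeries_ext; intros n; replace (S k + n)%nat with (S (k + n)) by lia; ring.
Qed.

Lemma resolvent_bound (y : seqC) B :
  (forall j, Cmod (y j) <= B) -> forall k, Cmod (resolvent y k) <= 2 * B / (Cmod beta - 1).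
Proof.
  intros HB k; eapply Rle_trans; [apply (Cmod_resolvent_le y B k HB)|].
  destruct (Series_coef_weighted_le (fun n => Cmod (y (k + n)%nat)) B) as [_ Hle];
    [intros n; split; auto using Cmod_ge_0|].
  unfold Rdiv in *; lra.
Qed.

Lemma resolvent_lim_0 (y : seqC) :
  filterlim y eventually (locally (RtoC 0)) ->
  filterlim (resolvent y) eventually (locally (RtoC 0)).
Proof.
  intros Hy; destruct (filterlim_0_bounded y Hy) as [B HB].
  apply filterlim_0_iff; intros eps Heps.
  set (e := eps * (Cmod beta - 1) / 4).
  assert (He : 0 < e) by (unfold e; apply Rdiv_lt_0_compat; [apply Rmult_lt_0_compat|]; lra).
  destruct (proj1 (filterlim_0_iff y) Hy e He) as [N HN].
  exists N; intros k Hk; eapply Rle_lt_trans; [apply (Cmod_resolvent_le y B k HB)|].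
  destruct (Series_coef_weighted_le (fun n => Cmod (y (k + n)%nat)) e) as [_ Hle].
  { intros n; split; [apply Cmod_ge_0|apply Rlt_le, HN; lia]. }
  replace (e / (Cmod beta - 1)) with (eps / 4) in Hle by (unfold e; field; lra).
  lra.
Qed.

Lemma resolvent_hahn_series (y : seqC) : in_hahn y ->
  ex_series (hahn_term (resolvent y)) /\
  Series (hahn_term (resolvent y)) <= 2 / (Cmod beta - 1) * Series (hahn_term y).
Proof.
  intros [Hy Hlim]; destruct (filterlim_0_bounded y Hlim) as [B HB].
  destruct (Series_tail_weighted_le (fun n => Cmod (coef n)) (hahn_term y))
    as (Hin & Hout & Hsum);
    [intros; apply Cmod_ge_0|apply hahn_term_nonneg|eexists; apply is_series_Cmod_coef|exact Hy|].
  rewrite (is_series_unique _ _ is_series_Cmod_coef) in Hsum.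
  assert (Hpt : forall k, 0 <= hahn_term (resolvent y) k
                  <= 2 * Series (fun n => Cmod (coef n) * hahn_term y (k + n)%nat)).
  { intros k; split; [apply hahn_term_nonneg|].
    unfold hahn_term at 1; rewrite (resolvent_Delta y B k HB).
    eapply Rle_trans; [apply Rmult_le_compat_l; [apply pos_INR|]|].
    { apply (Cmod_resolvent_le _ (2 * B) k); intros j; now apply Cmod_Delta_le. }
    rewrite <- Rmult_assoc, (Rmult_comm (INR k) 2), Rmult_assoc, <- Series_scal_l.
    apply Rmult_le_compat_l; [lra|]; apply Series_le; [|apply Hin].
    intros n; unfold hahn_term; rewrite plus_INR.
    pose proof (pos_INR k); pose proof (pos_INR n); pose proof (Cmod_ge_0 (coef n)).
    pose proof (Cmod_ge_0 (Defs.Delta y (k + n)%nat)).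
    split; [apply Rmult_le_pos; [|apply Rmult_le_pos]; auto|].
    assert (0 <= INR n * (Cmod (coef n) * Cmod (Defs.Delta y (k + n)%nat))) by
      (apply Rmult_le_pos; [|apply Rmult_le_pos]; auto).
    lra. }
  destruct (ex_series_Series_le _ _ Hpt) as [Hex Hle]; [now apply ex_series_mult_l|].
  split; [exact Hex|]; rewrite Series_scal_l in Hle.
  eapply Rle_trans; [exact Hle|]; unfold Rdiv; rewrite Rmult_assoc.
  apply Rmult_le_compat_l; [lra|exact Hsum].
Qed.

Lemma resolvent_in_hahn (y : seqC) : in_hahn y ->
  in_hahn (resolvent y) /\ hahn_norm (resolvent y) <= 2 / (Cmod beta - 1) * hahn_norm y.
Proof.
  intros Hy; destruct (resolvent_hahn_series y Hy) as [Hex Hle].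
  destruct (filterlim_0_bounded y (proj2 Hy)) as [B0 HB0].
  destruct (real_Sup_seq_spec (fun k => Cmod (y k)) B0) as [HB _];
    [intros k; split; auto using Cmod_ge_0|].
  set (B := real (Sup_seq (fun k => Cmod (y k)))) in *.
  destruct (real_Sup_seq_spec (fun k => Cmod (resolvent y k)) (2 * B / (Cmod beta - 1)))
    as [_ Hsup]; [intros k; split; [apply Cmod_ge_0|now apply resolvent_bound]|].
  split; [split; [exact Hex|apply resolvent_lim_0, Hy]|].
  specialize (Hsup _ (resolvent_bound y B HB)).
  change (Series (hahn_term (resolvent y)) + real (Sup_seq (fun k => Cmod (resolvent y k)))
          <= 2 / (Cmod beta - 1) * (Series (hahn_term y) + B)).
  unfold Rdiv in *; lra.
Qed.
End Resolvent.

Lemma shifted_Delta_eq (alpha : C) (x : seqC) k :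
  shifted_Delta alpha x k = ((alpha - 1) * x k + x (S k))%C.
Proof. unfold shifted_Delta, Defs.Delta; ring. Qed.

Lemma hahn_resolvent_outside_disc (alpha : C) :
  1 < Cmod (1 - alpha) -> hahn_resolvent alpha.
Proof.
  intros Halpha; set (beta := (alpha - 1)%C).
  assert (Hbeta : 1 < Cmod beta)
    by (rewrite <- Cmod_opp; replace (- beta)%C with (1 - alpha)%C by (unfold beta; ring); auto).
  exists (resolvent beta); split; [|split; [|split; [|split]]].
  - intros y Hy; apply (resolvent_in_hahn beta Hbeta y Hy).
  - intros y z a b Hy Hz.
    destruct (filterlim_0_bounded y (proj2 Hy)) as [By HBy].
    destruct (filterlim_0_bounded z (proj2 Hz)) as [Bz HBz].
    now apply (resolvent_linear beta Hbeta y z a b By Bz).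
  - exists (2 / (Cmod beta - 1)); intros y Hy; apply (resolvent_in_hahn beta Hbeta y Hy).
  - intros y Hy; destruct (filterlim_0_bounded y (proj2 Hy)) as [B HB].
    apply functional_extensionality; intros k; rewrite shifted_Delta_eq.
    apply (resolvent_recurrence beta Hbeta y B k HB).
  - intros x Hx; destruct (filterlim_0_bounded x (proj2 Hx)) as [B HB].
    apply functional_extensionality; intros k.
    replace (shifted_Delta alpha x) with (fun j => beta * x j + 1 * x (S j))%C
      by (apply functional_extensionality; intros j; rewrite shifted_Delta_eq; unfold beta; ring).
    rewrite (resolvent_linear beta Hbeta x (fun j => x (S j)) beta 1 B B HB (fun j => HB (S j))).
    rewrite Cmult_1_l; apply (resolvent_recurrence beta Hbeta x B k HB).
Qed.

Lemma sum_n_INR_mult_pow (r : R) N :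
  sum_n (fun k => INR k * r ^ k) N * (1 - r) ^ 2
  = r - INR (S N) * r ^ (S N) + INR N * r ^ (S (S N)).
Proof.
  induction N as [|N IH].
  - rewrite sum_O; simpl; ring.
  - rewrite sum_Sn; unfold plus; cbn -[INR pow sum_n].
    rewrite Rmult_plus_distr_r, IH, !S_INR; simpl; ring.
Qed.

Lemma ex_series_INR_mult_pow (r : R) : 0 <= r < 1 -> ex_series (fun k => INR k * r ^ k).
Proof.
  intros Hr; apply (ex_series_bounded_nonneg _ (r / (1 - r) ^ 2)).
  - intros n; apply Rmult_le_pos; [apply pos_INR|apply pow_le; lra].
  - intros N; pose proof (sum_n_INR_mult_pow r N) as Hsum.
    assert (Hp : 0 < (1 - r) ^ 2) by (apply pow_lt; lra).
    assert (INR N * r ^ S (S N) <= INR (S N) * r ^ S N).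
    { rewrite S_INR; simpl; pose proof (pow_le r N ltac:(lra)); pose proof (pos_INR N).
      assert (0 <= r * r ^ N) by nra.
      assert (r * (r * r ^ N) <= r * r ^ N) by nra; nra. }
    apply (Rmult_le_reg_r ((1 - r) ^ 2)); auto.
    unfold Rdiv; rewrite Rmult_assoc, Rinv_l by lra; lra.
Qed.

Lemma geometric_in_hahn (g : C) : Cmod g < 1 -> in_hahn (Cpow g).
Proof.
  intros Hg; pose proof (Cmod_ge_0 g); split.
  - apply (ex_series_Series_le _ (fun k => Cmod (1 - g) * (INR k * Cmod g ^ k))).
    + intros n; split; [apply Rmult_le_pos; [apply pos_INR|apply Cmod_ge_0]|].
      replace (Cpow g n - Cpow g (S n))%C with ((1 - g) * Cpow g n)%C by (simpl; ring).
      rewrite Cmod_mult, Cmod_pow; right; ring.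
    + apply ex_series_mult_l, ex_series_INR_mult_pow; lra.
  - apply filterlim_0_iff; intros eps Heps.
    destruct (pow_lt_1_zero (Cmod g) ltac:(rewrite Rabs_pos_eq; lra) eps Heps) as [N HN].
    exists N; intros k Hk; rewrite Cmod_pow.
    specialize (HN k ltac:(lia)); rewrite Rabs_pos_eq in HN; auto; apply pow_le; lra.
Qed.

Lemma real_Rbar_mult (a : R) (s : Rbar) : 0 <= a -> real (Rbar_mult a s) = a * real s.
Proof.
  intros Ha; destruct s as [x| |]; [simpl; ring| |];
    unfold Rbar_mult, Rbar_mult'; destruct (Rle_dec 0 a) as [h|h];
    try destruct (Rle_lt_or_eq_dec 0 a h); simpl; ring.
Qed.

Lemma hahn_norm_scal (d : C) (x : seqC) :
  hahn_norm (fun k => d * x k)%C = Cmod d * hahn_norm x.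
Proof.
  unfold hahn_norm; rewrite Rmult_plus_distr_l; f_equal.
  - rewrite <- Series_scal_l; apply Series_ext; intros n.
    replace (d * x n - d * x (S n))%C with (d * (x n - x (S n)))%C by ring.
    rewrite Cmod_mult; ring.
  - rewrite <- real_Rbar_mult, <- Sup_seq_scal_l by apply Cmod_ge_0.
    f_equal; apply Sup_seq_ext; intros n; now rewrite Cmod_mult.
Qed.

Lemma hahn_norm_geometric_ge_1 (g : C) : Cmod g < 1 -> 1 <= hahn_norm (Cpow g).
Proof.
  intros Hg; destruct (geometric_in_hahn g Hg) as [Hs _]; pose proof (Cmod_ge_0 g).
  assert (0 <= Series (hahn_term (Cpow g))) by (apply Series_nonneg; auto using hahn_term_nonneg).
  destruct (real_Sup_seq_spec (fun k => Cmod (Cpow g k)) 1) as [Hsup _].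
  { intros k; split; [apply Cmod_ge_0|]; rewrite Cmod_pow, <- (pow1 k); apply pow_incr; lra. }
  specialize (Hsup 0%nat); simpl in Hsup; rewrite Cmod_1 in Hsup.
  change (1 <= Series (hahn_term (Cpow g)) + real (Sup_seq (fun k => Cmod (Cpow g k)))); lra.
Qed.

Lemma shifted_Delta_geometric (alpha g : C) :
  shifted_Delta alpha (Cpow g) = (fun k => (alpha - 1 + g) * Cpow g k)%C.
Proof.
  apply functional_extensionality; intros k; rewrite shifted_Delta_eq; simpl; ring.
Qed.

Lemma no_hahn_resolvent_in_disc (alpha : C) :
  Cmod (1 - alpha) <= 1 -> ~ hahn_resolvent alpha.
Proof.
  intros Hdisc [S [_ [Hlin [[M HM] [_ Hleft]]]]].
  set (beta := (alpha - 1)%C).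
  assert (Hbeta : Cmod beta <= 1)
    by (rewrite <- Cmod_opp; replace (- beta)%C with (1 - alpha)%C by (unfold beta; ring); auto).
  pose proof (Cmod_ge_0 beta); pose proof (Rabs_pos M).
  set (s := / (2 * (Rabs M + 1))).
  assert (Hs : 0 < s <= 1 / 2) by (unfold s; split; [apply Rinv_0_lt_compat|
    rewrite <- Rinv_inv; apply Rinv_le_contravar]; lra).
  assert (HsM : s * Rabs M < 1)
    by (unfold s; apply (Rmult_lt_reg_r (2 * (Rabs M + 1))); [lra|];
        rewrite Rmult_comm, <- Rmult_assoc, Rinv_r; lra).
  set (g := (- (RtoC (1 - s) * beta))%C).
  assert (Hg : Cmod g < 1)
    by (unfold g; rewrite Cmod_opp, Cmod_mult, Cmod_R, Rabs_pos_eq by lra; nra).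
  set (x := Cpow g); assert (Hx : in_hahn x) by now apply geometric_in_hahn.
  set (d := (RtoC s * beta)%C).
  assert (Hd : Cmod d <= s) by (unfold d; rewrite Cmod_mult, Cmod_R, Rabs_pos_eq; nra).
  assert (Hx_eq : x = (fun k => d * S x k)%C).
  { rewrite <- (Hleft x Hx) at 1.
    replace (shifted_Delta alpha x) with (fun k => d * x k + 0 * x k)%C.
    - rewrite (Hlin x x d 0 Hx Hx); apply functional_extensionality; intros k; ring.
    - unfold x; rewrite shifted_Delta_geometric; apply functional_extensionality; intros k.
      unfold d, g, beta; rewrite RtoC_minus; ring. }
  assert (Hnorm : hahn_norm x = Cmod d * hahn_norm (S x))
    by (rewrite <- hahn_norm_scal, <- Hx_eq; reflexivity).
  pose proof (hahn_norm_geometric_ge_1 g Hg) as HN; fold x in HN.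
  pose proof (HM x Hx) as HSx; pose proof (Cmod_ge_0 d).
  assert (Hbound : hahn_norm x <= s * Rabs M * hahn_norm x).
  { rewrite Hnorm at 1; rewrite Rmult_assoc.
    apply Rle_trans with (Cmod d * (Rabs M * hahn_norm x)).
    - apply Rmult_le_compat_l; [auto|]; eapply Rle_trans; [exact HSx|].
      apply Rmult_le_compat_r; [lra|apply Rle_abs].
    - apply Rmult_le_compat_r; [apply Rmult_le_pos|]; lra. }
  assert (s * Rabs M * hahn_norm x < hahn_norm x)
    by (rewrite <- (Rmult_1_l (hahn_norm x)) at 2; apply Rmult_lt_compat_r; lra).
  lra.
Qed.

Theorem theorem4p1 (alpha : C) :
  hahn_spectrum_Delta alpha <-> Cmod (Cminus (RtoC 1) alpha) <= 1.
Proof.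
  unfold hahn_spectrum_Delta; split.
  - intros Hspec; destruct (Rle_lt_dec (Cmod (1 - alpha)) 1) as [Hle|Hlt]; [exact Hle|].
    exfalso; now apply Hspec, hahn_resolvent_outside_disc.
  - apply no_hahn_resolvent_in_disc.
Qed.
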